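(* Let $B$ be a Lie algebra over a field $k$ satisfying the axioms $\Phi1$: $\forall x_1,x_2,x_3,x_4\ (x_1x_2)(x_3x_4)=0$ and $\Phi2$: $\forall x\forall y\ (xyx=0\wedge xyy=0\to xy=0)$. Then $B$ is metabelian, and $\mathrm{Fit}(B)$ as well as every nilpotent subalgebra of $B$ is abelian.
   Context: Products are left-normed: $xyx=(xy)x$. $\mathrm{Fit}(B)$, the Fitting radical of $B$, is the sum of all nilpotent ideals of $B$. *)

(* Lie algebras over a field k, possibly infinite-dimensional:
   a k-vector space V (lmodType k) with a bracket br; products are left-normed,
   e.g. xyx = br (br x y) x. *)
From HB Require Import structures.
From mathcomp Require Import all_boot all_algebra.
Set Implicit Arguments. Unset Strict Implicit. Unset Printing Implicit Defensive.
Import GRing.Theory.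
Local Open Scope ring_scope.

Section Lie.
Variables (k : fieldType) (V : lmodType k) (br : V -> V -> V).

Definition is_lie : Prop :=
  [/\ (forall (a : k) x y z, br (a *: x + y) z = a *: br x z + br y z),
      (forall (a : k) x y z, br z (a *: x + y) = a *: br z x + br z y),
      (forall x, br x x = 0) &
      (forall x y z, br (br x y) z + br (br y z) x + br (br z x) y = 0)].

Inductive span (A : V -> Prop) : V -> Prop :=
  | span0 : span A 0
  | span_in x : A x -> span A x
  | span_add x y : span A x -> span A y -> span A (x + y)
  | span_scale (a : k) x : span A x -> span A (a *: x).

Definition subspace (S : V -> Prop) : Prop :=
  [/\ S 0, (forall x y, S x -> S y -> S (x + y)) &
      (forall (a : k) x, S x -> S (a *: x))].

Definition subalgebra (S : V -> Prop) : Prop :=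
  subspace S /\ (forall x y, S x -> S y -> S (br x y)).

Definition ideal (S : V -> Prop) : Prop :=
  subspace S /\ (forall x y, S x -> S (br x y)).

Definition brset (A C : V -> Prop) : V -> Prop :=
  span (fun z => exists x y, [/\ A x, C y & z = br x y]).

Fixpoint lcs (S : V -> Prop) (n : nat) : V -> Prop :=
  if n is n'.+1 then brset (lcs S n') S else S.

Definition nilpotent (S : V -> Prop) : Prop :=
  exists n, forall x, lcs S n x -> x = 0.

Definition abelian (S : V -> Prop) : Prop :=
  forall x y, S x -> S y -> br x y = 0.

Definition whole : V -> Prop := fun _ => True.

Definition derived : V -> Prop := brset whole whole.
Definition metabelian : Prop := abelian derived.

Definition Fit : V -> Prop :=
  span (fun x => exists I, [/\ ideal I, nilpotent I & I x]).

Definition Phi1 : Prop := forall x1 x2 x3 x4, br (br x1 x2) (br x3 x4) = 0.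
Definition Phi2 : Prop :=
  forall x y, br (br x y) x = 0 -> br (br x y) y = 0 -> br x y = 0.

End Lie.

(* Phi1 says that B^2 annihilates B^2, which is metabelianity.  For the other
   two claims the point is that Phi2 turns "a bracket [x, y] is killed by x and
   by y" into "[x, y] = 0".  In a nilpotent S, descending induction along the
   lower central series shows that every u in C^m(S), m >= 1, commutes with S:
   [u, x] lies one step deeper, so [u, x] x = 0 by induction, while
   [u, x] u = 0 by Phi1.  Two elements of nilpotent ideals I, J commute since
   [a, b] lies in I and in J, both abelian by the previous claim. *)
From Pilot Require Import Defs.
From mathcomp Require Import all_boot all_algebra.
Set Implicit Arguments. Unset Strict Implicit. Unset Printing Implicit Defensive.
Import GRing.Theory.
Local Open Scope ring_scope.

Lemma span_sub (k : fieldType) (V : lmodType k) (A C : V -> Prop) :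
  (forall z, A z -> C z) -> forall x, Defs.span A x -> Defs.span C x.
Proof.
move=> sAC x; elim=> [|y /sAC|y z _ Cy _ Cz|a y _ Cy].
- exact: Defs.span0.
- exact: Defs.span_in.
- exact: Defs.span_add.
- exact: Defs.span_scale.
Qed.

Section LieAlgebra.
Variables (k : fieldType) (V : lmodType k) (br : V -> V -> V).
Hypothesis lieB : is_lie br.

Lemma brDl x y z : br (x + y) z = br x z + br y z.
Proof. by case: lieB => brl _ _ _; have := brl 1 x y z; rewrite !scale1r. Qed.

Lemma brDr x y z : br z (x + y) = br z x + br z y.
Proof. by case: lieB => _ brr _ _; have := brr 1 x y z; rewrite !scale1r. Qed.

Lemma br0l z : br 0 z = 0.
Proof. by apply: (addrI (br 0 z)); rewrite -brDl !addr0. Qed.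

Lemma br0r z : br z 0 = 0.
Proof. by apply: (addrI (br z 0)); rewrite -brDr !addr0. Qed.

Lemma brZl a x z : br (a *: x) z = a *: br x z.
Proof. by case: lieB => brl _ _ _; have := brl a x 0 z; rewrite !addr0 br0l addr0. Qed.

Lemma brZr a x z : br z (a *: x) = a *: br z x.
Proof. by case: lieB => _ brr _ _; have := brr a x 0 z; rewrite !addr0 br0r addr0. Qed.

Lemma br_anti x y : br x y = - br y x.
Proof.
case: lieB => _ _ brxx _; apply/eqP; rewrite -addr_eq0.
by have := brxx (x + y); rewrite brDl !brDr !brxx add0r addr0 => ->.
Qed.

Lemma br_span_eq0l (A : V -> Prop) y :
  (forall a, A a -> br a y = 0) -> forall u, Defs.span A u -> br u y = 0.
Proof.
move=> Ay0 u; elim=> [|z /Ay0 //|z w _ zy0 _ wy0|a z _ zy0].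
- exact: br0l.
- by rewrite brDl zy0 wy0 addr0.
- by rewrite brZl zy0 scaler0.
Qed.

Lemma br_span_eq0r (A : V -> Prop) y :
  (forall a, A a -> br y a = 0) -> forall u, Defs.span A u -> br y u = 0.
Proof.
move=> Ay0 u; elim=> [|z /Ay0 //|z w _ zy0 _ wy0|a z _ zy0].
- exact: br0r.
- by rewrite brDr zy0 wy0 addr0.
- by rewrite brZr zy0 scaler0.
Qed.

Lemma lcsS_derived (S : V -> Prop) m u : lcs br S m.+1 u -> derived br u.
Proof. by apply: span_sub => z [x [y [_ _ ->]]]; exists x, y. Qed.

Section Phi1.
Hypothesis phi1 : Phi1 br.

Lemma br_br_derived a b u : derived br u -> br (br a b) u = 0.
Proof. by apply: br_span_eq0r => _ [x [y [_ _ ->]]]; apply: phi1. Qed.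

Lemma Phi1_metabelian : metabelian br.
Proof.
move=> x y Dx Dy; apply: br_span_eq0l Dx => _ [a [b [_ _ ->]]].
exact: br_br_derived.
Qed.

Section Phi2.
Hypothesis phi2 : Phi2 br.

Section Nilpotent.
Variables (S : V -> Prop) (n : nat).
Hypothesis lcsS_n : forall u, lcs br S n u -> u = 0.

Lemma br_lcsS_eq0 d m u x :
  (m.+1 + d)%N = n -> lcs br S m.+1 u -> S x -> br u x = 0.
Proof.
elim: d m u => [|d IHd] m u; first by rewrite addn0 => -> /lcsS_n -> _; apply: br0l.
move=> mdn Cu Sx; have Cux : lcs br S m.+2 (br u x) by apply: Defs.span_in; exists u, x.
apply: phi2; first exact/br_br_derived/(lcsS_derived Cu).
by apply: (IHd m.+1) => //; rewrite -mdn addSnnS.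
Qed.

End Nilpotent.

Lemma nilpotent_abelian (S : V -> Prop) : nilpotent br S -> abelian br S.
Proof.
case=> [[|n] lcsS_n] x y Sx Sy; first by rewrite (lcsS_n x Sx) br0l.
have Cxy : lcs br S 1 (br x y) by apply: Defs.span_in; exists x, y.
by apply: phi2; apply: (@br_lcsS_eq0 S n.+1 lcsS_n n 0).
Qed.

Lemma Fit_abelian : abelian br (Fit br).
Proof.
move=> x y Fx Fy; apply: br_span_eq0l Fx => a [I [[[_ _ ZI] brI] nilI Ia]].
apply: br_span_eq0r Fy => b [J [[[_ _ ZJ] brJ] nilJ Jb]].
have Iab : I (br a b) by apply: brI.
have Jab : J (br a b) by rewrite br_anti -scaleN1r; apply/ZJ/brJ.
by apply: phi2; [apply: (nilpotent_abelian nilI) | apply: (nilpotent_abelian nilJ)].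
Qed.

End Phi2.
End Phi1.
End LieAlgebra.

Theorem lemma3p1 (k : fieldType) (V : lmodType k) (br : V -> V -> V) :
  is_lie br -> Phi1 br -> Phi2 br ->
  [/\ metabelian br, abelian br (Fit br) &
      forall S : V -> Prop, subalgebra br S -> nilpotent br S -> abelian br S].
Proof.
move=> lieB phi1 phi2; split.
- exact: Phi1_metabelian.
- exact: Fit_abelian.
- by move=> S _; apply: nilpotent_abelian.
Qed.
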